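(* Assume (A) and (D), and that for some $\omega\ge0$ the potential profile satisfies: for every $c>0$ and $\lambda\ge1$, $\limsup_{s\to0^+}\frac{g(f^{-1}(cs^\lambda))}{g(f^{-1}(s))}\le\lambda^\omega$. Fix $t>0$. Let $\eta,\sigma:[0,\infty)\to(0,\infty)$ be continuous increasing functions with $1/\eta\in L^1((1,\infty),dx)$, $\sigma(r)<r$ for $r\ge1$, $\sup_{r\ge1}f(\sigma(r))/f(r)<\infty$, and such that $r\mapsto\frac{(d-1)\log r+\log\eta(r)}{|\log f(r)|}$ is eventually decreasing with $$b:=\lim_{r\to\infty}\frac{(d-1)\log r+\log\eta(r)}{|\log f(r)|}\in[0,2).$$ Let $H_t(r)=f^2(r)r^{d-1}\eta(r)\exp(\widetilde Ktg(r))$, $\widetilde w_t(r)=g^2(r)\exp(\widetilde Ktg(r))$, $v_t(r)=\widetilde w_t(r)\frac{\eta(r)}{r-\sigma(r)}$. Let $\kappa,\widetilde\kappa>0$, $\alpha_t(u)=(f^2)^{-1}(\kappa/u)$ and $\gamma_t(u)=H_t^{-1}(\widetilde\kappa/u)$ for $u$ large enough, $H_t^{-1}$ being the inverse of $H_t$ restricted to a half-line on which it is continuous and strictly decreasing (such a half-line exists). (a) For every $\varepsilon\in(0,2-b)$ there is $r_\varepsilon>0$ with $f^2(r)\le H_t(r)\le f^{2-b-\varepsilon}(r)$ for $r>r_\varepsilon$; moreover $$1\le\liminf_{u\to\infty}\frac{g(\gamma_t(u))}{g(\alpha_t(u))}\le\limsup_{u\to\infty}\frac{g(\gamma_t(u))}{g(\alpha_t(u))}\le\Big(\frac{2}{2-b}\Big)^{\omega},$$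 and for every $\delta>0$, $\lim_{u\to\infty}\widetilde w_t(\gamma_t(u))/u^\delta=0$. (b) If in addition $\lim_{r\to\infty}\frac{\log\eta(r)-\log(r-\sigma(r))}{g(r)}=0$, then $$\lim_{u\to\infty}\frac{\log\eta(\gamma_t(u))-\log(\gamma_t(u)-\sigma(\gamma_t(u)))}{g(\alpha_t(u))}=0$$ and for every $\delta>0$, $\lim_{u\to\infty}v_t(\gamma_t(u))/u^\delta=0$.
   Context: Setting. Fix $d\ge1$. Let $A$ be a positive semidefinite $d\times d$ matrix and $\nu$ a symmetric Lévy measure on $\mathbb R^d\setminus\{0\}$ (positive Radon measure with $\int(1\wedge|z|^2)\,\nu(dz)<\infty$, $\nu(-B)=\nu(B)$) with $\nu(\mathbb R^d\setminus\{0\})=\infty$, absolutely continuous with density also denoted $\nu(x)$. The Lévy operator $L$ on $L^2(dx)$ is the Fourier multiplier $\widehat{Lh}(\xi)=-\Psi(\xi)\widehat h(\xi)$ with $\Psi(\xi)=\tfrac12A\xi\cdot\xi+\int(1-\cos(\xi\cdot z))\,\nu(dz)$; $\{P_t\}_{t\ge0}$ is the associated convolution semigroup, $P_th(x)=\int p_t(y-x)h(y)\,dy$ with densities $p_t$. Let $V$ be locally bounded on $\mathbb R^d$ with $V(x)\to\infty$ as $|x|\to\infty$, and let $H=-L+V$ (self-adjoint, bounded below, defined via quadratic forms on $L^2(dx)$). For $t>0$, $e^{-tH}$ has a continuous, positive, symmetric kernel $u_t(x,y)$. Let $\lambda_0=\inf\sigma(H)$ (a simple eigenvalue) and $\varphi_0$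 the corresponding strictly positive, continuous, bounded eigenfunction with $\|\varphi_0\|_{L^2(dx)}=1$. Set $\mu(dx)=\varphi_0^2(x)\,dx$ (a probability measure), $q_t(x,y)=\dfrac{e^{\lambda_0t}u_t(x,y)}{\varphi_0(x)\varphi_0(y)}$ and $Q_th(x)=\int q_t(x,y)h(y)\,\mu(dy)$; $\{Q_t\}$ is a semigroup of contractions on every $L^p(\mu)$, $1\le p\le\infty$, and $q_t$ is symmetric. Assumption (A): there exist a strictly decreasing continuous $f:(0,\infty)\to(0,\infty)$, a strictly increasing continuous $g:[0,\infty)\to(0,\infty)$, constants $C_1,C_2\ge1$ and $R_0>0$ such that $C_1^{-1}f(|x|)\le\nu(x)\le C_1f(|x|)$ for $x\ne0$ and $C_2^{-1}g(|x|)\le V(x)\le C_2g(|x|)$ for $|x|\ge R_0$, and moreover: (A1) there is $C_3>0$ with $\int_{\{|x-y|>1,\,|y|>1\}}f(|x-y|)f(|y|)\,dy\le C_3f(|x|)$ for $|x|\ge1$; (A2) $(t,x)\mapsto p_t(x)$ is continuous on $(0,\infty)\times\mathbb R^d$ and for every $t_b>0$ there are $C_4,C_5>0$ with $p_t(x)\le C_4\big([e^{C_5t}f(|x|)]\wedge1\big)$ for $x\neq0$, $t\ge t_b$, and $\sup_{t\in(0,t_b]}\sup_{r\le|x|\le2}p_t(x)<\infty$ for every $r\in(0,1]$; (A3) there is $C_6\ge1$ with $g(r+1)\le C_6g(r)$ for $r\ge R_0$. Under (A), $f$ is a bijection of $(0,\infty)$ onto $(0,\infty)$ and $f^{-1}$,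 $(f^2)^{-1}$ denote the inverses. We write $f_1=f\wedge1$. Condition (D): the map $r\mapsto g(r)/|\log f(r)|$ is eventually decreasing and $\lim_{r\to\infty}g(r)/|\log f(r)|=0$. Heat kernel estimate (a known consequence of (A), used as standing input): for every $T>0$ there exist $\rho>1$, $C=C(T)>0$ and constants $K,\widetilde K>0$ independent of $T$ such that for all $x,y\in\mathbb R^d$ and $t\ge T$, $C^{-1}\max\{1,e^{\lambda_0t}\Gamma(\widetilde Kt,x,y)\}\le q_t(x,y)\le C\max\{1,e^{\lambda_0t}\Gamma(Kt,x,y)\}$, where $\Gamma(\tau,x,y)=\dfrac{\mathbf 1_{\{|x|,|y|>\rho\}}}{f_1(|x|)f_1(|y|)}\displaystyle\int_{\rho-1<|z|<|x|\vee|y|}f_1(|x-z|)f_1(|z-y|)e^{-\tau g(|z|)}\,dz$. Throughout, $K$ and $\widetilde K$ denote fixed constants for which this two-sided estimate holds. *)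

From HB Require Import structures.
From mathcomp Require Import all_boot all_order all_algebra.
From mathcomp Require Import all_classical all_reals all_analysis.
Set Implicit Arguments. Unset Strict Implicit. Unset Printing Implicit Defensive.
Import Order.TTheory GRing.Theory Num.Theory.
Local Open Scope ring_scope.

Section Profiles.
Variable R : realType.

Definition Ht (d : nat) (Kt t : R) (f g eta : R -> R) (r : R) : R :=
  f r ^+ 2 * r ^+ d.-1 * eta r * expR (Kt * t * g r).

Definition wt (Kt t : R) (g : R -> R) (r : R) : R :=
  g r ^+ 2 * expR (Kt * t * g r).

Definition vt (Kt t : R) (g eta sigma : R -> R) (r : R) : R :=
  wt Kt t g r * eta r / (r - sigma r).

Definition bratio (d : nat) (f eta : R -> R) (r : R) : R :=
  ((d.-1)%:R * ln r + ln (eta r)) / `|ln (f r)|.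

End Profiles.

From HB Require Import structures.
From mathcomp Require Import all_boot all_order all_algebra.
From mathcomp Require Import all_classical all_reals all_analysis.
From mathcomp Require Import ring lra.

Set Implicit Arguments.
Unset Strict Implicit.
Unset Printing Implicit Defensive.

Import Order.TTheory GRing.Theory Num.Theory numFieldNormedType.Exports.
Local Open Scope classical_set_scope.
Local Open Scope ring_scope.

(* When 0 < f r < 1, H_t(r) = f(r)^theta(r) with
   theta(r) = 2 - bratio(r) - Kt t g(r) / |log f(r)|, and theta(r) -> 2 - b by (D).
   Hence f^2 <= H_t <= f^p near infinity for every p < 2 - b, and H_t is eventually
   decreasing because theta is.  Feeding H_t(gamma) = kappat / u and
   f(alpha)^2 = kappa / u into these bounds gives
   c f(alpha)^(2/p) <= f(gamma) <= C f(alpha), and the profile condition on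
   g o f^-1 turns this into the bounds on g(gamma) / g(alpha).  Finally
   |log f(gamma)| <= (log u) / p and g = o(|log f|) give g(gamma(u)) = o(log u),
   so any exponential of g(gamma(u)) grows more slowly than every power of u. *)

Section limf_esup_near.
Context {T : choiceType} {X : filteredType T} {R : realType}.
Variables (f : X -> \bar R) (F : set_system X).
Local Open Scope ereal_scope.

Lemma limf_esup_le_near a : (\forall x \near F, f x <= a) -> limf_esup f F <= a.
Proof.
move=> Fa; rewrite limf_esupE.
apply: (le_trans (ereal_inf_lbound _)); first by exists [set x | f x <= a].
by apply: ge_ereal_sup => _ [x /= fx <-].
Qed.

Lemma limf_einf_ge_near a : (\forall x \near F, a <= f x) -> a <= limf_einf f F.
Proof.
move=> Fa; rewrite limf_einfE.
apply: le_trans (ereal_sup_ubound _); last by exists [set x | a <= f x].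
by apply: le_ereal_inf_tmp => _ [x /= fx <-].
Qed.

Lemma limf_esup_lt_near {FF : Filter F} a :
  limf_esup f F < a -> \forall x \near F, f x < a.
Proof.
rewrite limf_esupE => /ereal_inf_lt [_ [V FV <-]] Va.
apply: filterS FV => x Vx; apply: le_lt_trans Va.
by apply: ereal_sup_ubound; exists x.
Qed.

Lemma limf_einf_le_esup {FF : ProperFilter F} : limf_einf f F <= limf_esup f F.
Proof.
rewrite limf_einfE limf_esupE.
apply: ge_ereal_sup => _ [V FV <-]; apply: le_ereal_inf_tmp => _ [W FW <-].
have [x [Vx Wx]] := filter_ex (filterI FV FW).
apply: le_trans (ereal_inf_lbound _) _; first by exists x.
by apply: ereal_sup_ubound; exists x.
Qed.

End limf_esup_near.

Section real_asymptotics.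
Variable R : realType.

Lemma near_pinfty_pos (P : R -> Prop) :
  (\forall r \near +oo, P r) -> exists M, 0 < M /\ forall r, M < r -> P r.
Proof.
move=> [M [_ HM]]; exists (Num.max M 1); split; first by rewrite lt_max ltr01 orbT.
by move=> r; rewrite gt_max => /andP[Mr _]; exact: HM.
Qed.

Lemma cvg_at_right0 {T : Type} {F : set_system T} {FF : Filter F} (h : T -> R) :
  h @ F --> 0 -> (\forall x \near F, 0 < h x) -> h @ F --> 0^'+.
Proof.
by move=> h0 hpos P /h0; apply: filterS2 hpos => x hx /(_ hx).
Qed.

Lemma ln_cvgy : @ln R x @[x --> +oo] --> +oo.
Proof.
apply/cvgryPge => A; near=> x.
have Ax : expR A < x by near: x; exact: (nbhs_pinfty_gt (num_real _)).
have x0 : 0 < x := lt_trans (expR_gt0 A) Ax.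
by rewrite -(expRK A) ler_ln ?posrE ?expR_gt0 // ltW.
Unshelve. all: end_near.
Qed.

Lemma sqr_le_4expR (x : R) : 0 <= x -> x ^+ 2 <= 4 * expR x.
Proof.
move=> x0.
have -> : expR x = expR (x / 2) ^+ 2 by rewrite -expRM_natl; congr expR; field.
have := expR_ge1Dx (x / 2); have : 0 <= x / 2 by rewrite divr_ge0.
rewrite !expr2; nra.
Qed.

Lemma sqr_le_div_cvg0r (h : R -> R) (c : R) :
  (\forall u \near +oo, 0 < h u /\ h u ^+ 2 <= c / u) -> h u @[u --> +oo] --> 0^'+.
Proof.
move=> hc; apply: cvg_at_right0; last by apply: filterS hc => u [].
apply/cvgr0Pnorm_lt => e e0; near=> u.
have [hu0 hu2] : 0 < h u /\ h u ^+ 2 <= c / u by near: u.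
have u0 : 0 < u by near: u; exact: (nbhs_pinfty_gt (num_real _)).
have ceu : c / e ^+ 2 < u by near: u; exact: (nbhs_pinfty_gt (num_real _)).
rewrite gtr0_norm // -(ltr_pXn2r (_ : (0 < 2)%N)) ?nnegrE ?(ltW hu0) ?(ltW e0) //.
by apply: le_lt_trans hu2 _; rewrite ltr_pdivrMr // mulrC -ltr_pdivrMr // exprn_gt0.
Unshelve. all: end_near.
Qed.

Lemma expR_ln_div_powR_cvg0 (c a : R) : 0 < a ->
  c * expR (a * ln u) / u `^ (2 * a) @[u --> +oo] --> 0.
Proof.
move=> a0.
have lim : c * expR (- (a * ln u)) @[u --> +oo] --> 0.
  rewrite -(mulr0 c); apply: cvgMl_tmp.
  exact: (cvg_comp _ _ (gt0_cvgMry a0 ln_cvgy) (@cvgr_expR R)).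
apply: cvg_trans lim; apply: near_eq_cvg; near=> u.
have u0 : 0 < u by near: u; exact: (nbhs_pinfty_gt (num_real _)).
rewrite /powR gt_eqF // -mulrA -expRN -expRD; congr (_ * expR _); ring.
Unshelve. all: end_near.
Qed.

Lemma sublog_expR_div_powR_cvg0 (X h : R -> R) (c A delta : R) :
  0 < A -> 0 < delta ->
  (forall e, 0 < e -> \forall u \near +oo, h u <= e * ln u) ->
  (\forall u \near +oo, 0 <= X u <= c * expR (A * h u)) ->
  X u / u `^ delta @[u --> +oo] --> 0.
Proof.
move=> A0 d0 h_ln hX; have d2 : 0 < delta / 2 by rewrite divr_gt0.
have := expR_ln_div_powR_cvg0 c d2.
have -> : 2 * (delta / 2) = delta by field.
apply: squeeze_cvgr (cvg_cst 0); near=> u.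
have /andP[X0 Xle] : 0 <= X u <= c * expR (A * h u) by near: u.
have hu : h u <= delta / 2 / A * ln u by near: u; apply: h_ln; rewrite !divr_gt0.
rewrite divr_ge0 ?powR_ge0 //= ler_pM2r ?invr_gt0 ?powR_gt0 //.
have c0 : 0 <= c by move: (le_trans X0 Xle); rewrite pmulr_lge0 // expR_gt0.
apply: le_trans Xle _; rewrite ler_wpM2l // ler_expR.
have -> : delta / 2 * ln u = A * (delta / 2 / A * ln u) by field; rewrite gt_eqF.
by rewrite ler_pM2l.
Unshelve. all: end_near.
Qed.

Lemma cvg0_mul_bounded {T : Type} {F : set_system T} {FF : Filter F} (h k : T -> R) M :
  h @ F --> 0 -> (\forall x \near F, `|k x| <= M) -> h x * k x @[x --> F] --> 0.
Proof.
move=> /cvgr0Pnorm_lt h0 kM; apply/cvgr0Pnorm_lt => e e0.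
have M1 : 0 < `|M| + 1 by rewrite ltr_pwDr.
near=> x.
have hx : `|h x| < e / (`|M| + 1) by near: x; apply: h0; rewrite divr_gt0.
have kx : `|k x| <= M by near: x.
rewrite normrM; apply: le_lt_trans (_ : `|h x| * (`|M| + 1) < e); last first.
  by rewrite -ltr_pdivlMr.
by rewrite ler_wpM2l // (le_trans kx) // (le_trans (ler_norm M)) // lerDl.
Unshelve. all: end_near.
Qed.

Lemma powR_div_approx_left (a q w e : R) : 0 < a -> 0 < q -> 0 <= w -> 0 < e ->
  exists p, [/\ 0 < p, p < q & (a / p) `^ w <= (a / q) `^ w + e].
Proof.
move=> a0 q0 w0 e0; set T := (a / q) `^ w.
have T0 : 0 < T by rewrite powR_gt0 ?divr_gt0.
set m := 1 + e / T; have m1 : 1 < m by rewrite ltrDl divr_gt0.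
set k := m `^ (w + 1)^-1.
have k1 : 1 < k.
  by rewrite /k /powR gt_eqF ?(lt_trans ltr01) // expR_gt1 mulr_gt0 ?invr_gt0 ?ln_gt0 // ltr_wpDl.
have k0 : 0 < k := lt_trans ltr01 k1.
exists (q / k); split; first by rewrite divr_gt0.
  by rewrite ltr_pdivrMr // ltr_pMr.
have -> : a / (q / k) = a / q * k by field; rewrite !gt_eqF.
rewrite (powRM _ (divr_ge0 (ltW a0) (ltW q0)) (ltW k0)) -powRrM.
have kw : m `^ ((w + 1)^-1 * w) <= m.
  by apply: ler1_powR; [exact: ltW | rewrite mulrC ler_pdivrMr ?ltr_wpDl // mul1r lerDl].
apply: le_trans (ler_wpM2l (ltW T0) kw) _.
by rewrite /m mulrDr mulr1 mulrCA divff ?mulr1 ?gt_eqF.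
Qed.

Lemma decr_cvg0_cvgy (h x : R -> R) r0 :
  (forall r s, r0 <= r -> r < s -> h s < h r) -> (\forall r \near +oo, 0 < h r) ->
  (\forall u \near +oo, r0 <= x u) -> h (x u) @[u --> +oo] --> 0 ->
  x u @[u --> +oo] --> +oo.
Proof.
move=> h_decr h_gt0 x_r0 hx0; apply/cvgryPge => A.
have [M [_ HM]] := near_pinfty_pos h_gt0.
set N := Num.max A (Num.max r0 (M + 1)).
have hN : 0 < h N by apply: HM; rewrite !lt_max ltrDl ltr01 !orbT.
near=> u.
have xu : r0 <= x u by near: u.
have hxu : h (x u) < h N by near: u; exact: cvgr_lt hx0 _ hN.
have : N <= x u.
  by rewrite leNgt; apply/negP => /(h_decr _ _ xu); rewrite ltNge (ltW hxu).
by apply: le_trans; rewrite le_max lexx.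
Unshelve. all: end_near.
Qed.

End real_asymptotics.

Section Ht_profile.
Variables (R : realType) (d : nat) (Kt t : R) (f g eta : R -> R).
Local Notation H := (Ht d Kt t f g eta).

Definition Ht_exponent (r : R) : R :=
  2 - bratio d f eta r - Kt * t * (g r / `|ln (f r)|).

Lemma Ht_gt0 r : 0 < r -> 0 < f r -> 0 < eta r -> 0 < H r.
Proof. by move=> r0 fr0 er0; rewrite !mulr_gt0 ?exprn_gt0 ?expR_gt0. Qed.

Lemma ln_Ht r : 0 < r -> 0 < f r -> 0 < eta r ->
  ln (H r) = 2 * ln (f r) + (d.-1)%:R * ln r + ln (eta r) + Kt * t * g r.
Proof.
move=> r0 fr0 er0; rewrite /Ht.
rewrite !lnM ?posrE ?mulr_gt0 ?exprn_gt0 ?expR_gt0 // expRK.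
by rewrite !lnXn // !mulr_natl.
Qed.

Lemma Ht_powR r : 0 < r -> 0 < f r < 1 -> 0 < eta r -> H r = f r `^ Ht_exponent r.
Proof.
move=> r0 /andP[fr0 fr1] er0.
have lnf0 : ln (f r) < 0 by rewrite ln_lt0 // fr0.
rewrite /powR gt_eqF // -[LHS]lnK ?posrE ?Ht_gt0 // ln_Ht //; congr expR.
rewrite /Ht_exponent /bratio ltr0_norm //; field.
by rewrite lt_eqF.
Qed.

Lemma Ht_exponent_cvg b : bratio d f eta r @[r --> +oo] --> b ->
  g r / `|ln (f r)| @[r --> +oo] --> 0 -> Ht_exponent r @[r --> +oo] --> 2 - b.
Proof.
move=> bcvg Gcvg.
have := cvgB (cvgB (cvg_cst (2 : R)) bcvg) (cvgMl_tmp (a := Kt * t) Gcvg).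
by rewrite mulr0 subr0; apply; exact: pinfty_nbhs_filter.
Qed.

Lemma Ht_continuous : {in `]0, +oo[, continuous f} ->
  {in `]0, +oo[, continuous g} -> {in `]0, +oo[, continuous eta} ->
  {in `]0, +oo[, continuous H}.
Proof.
move=> fc gc ec; suff Hc (r : R) : r \in `]0, +oo[ -> {for r, continuous H} by [].
move=> r0; rewrite /Ht; apply: continuousM; last first.
  apply: (@continuous_comp _ _ _ (fun x => Kt * t * g x) expR).
    exact: continuousM (cvg_cst _) (gc _ r0).
  exact: continuous_expR.
apply: continuousM (ec _ r0); apply: continuousM; last exact: exprn_continuous.
apply: (@continuous_comp _ _ _ f (fun x => x ^+ 2)); [exact: fc | exact: exprn_continuous].
Qed.

Lemma wt_le_expR r : 0 <= g r -> wt Kt t g r <= 4 * expR ((Kt * t + 1) * g r).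
Proof.
move=> gr0; rewrite /wt [(_ + 1) * _]mulrDl mul1r expRD mulrCA mulrC.
by rewrite ler_wpM2l ?expR_ge0 // sqr_le_4expR.
Qed.

Lemma vt_le_expR (sigma : R -> R) r : 0 <= g r -> 0 < eta r -> sigma r < r ->
  ln (eta r) - ln (r - sigma r) <= g r ->
  vt Kt t g eta sigma r <= 4 * expR ((Kt * t + 2) * g r).
Proof.
move=> gr0 er0 sr Ng; have rs0 : 0 < r - sigma r by rewrite subr_gt0.
have -> : vt Kt t g eta sigma r = wt Kt t g r * expR (ln (eta r) - ln (r - sigma r)).
  by rewrite /vt expRD expRN !lnK ?posrE // mulrA.
apply: le_trans (ler_wpM2r (expR_ge0 _) (wt_le_expR gr0)) _.
by rewrite -mulrA -expRD ler_wpM2l // ler_expR; lra.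
Qed.

End Ht_profile.

Section Ht_asymptotics.
Variables (R : realType) (d : nat) (f g finv eta sigma : R -> R).
Variables (Kt t b omega kappa kappat r0 : R) (gamma alpha : R -> R).
Local Notation H := (Ht d Kt t f g eta).
Local Notation theta := (Ht_exponent d Kt t f g eta).

(* Declared first so that, once the section is closed, they are the leading explicit
   arguments of the lemmas below and determine the parameters their conclusions omit. *)
Hypotheses (f_finv : forall y, 0 < y -> 0 < finv y /\ f (finv y) = y)
  (bratio_cvg : bratio d f eta r @[r --> +oo] --> b)
  (Ht_decr : forall r s, r0 <= r -> r < s -> H s < H r)
  (gamma_spec : \forall u \near +oo, r0 <= gamma u /\ H (gamma u) = kappat / u)
  (alpha_spec : \forall u \near +oo, 0 < alpha u /\ f (alpha u) ^+ 2 = kappa / u)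
  (profile : forall c lam, 0 < c -> 1 <= lam ->
     (limf_esup (fun s => (g (finv (c * s `^ lam)) / g (finv s))%:E) (0^'+)
       <= (lam `^ omega)%:E)%E).
Hypotheses (f_gt0 : forall r, 0 < r -> 0 < f r)
  (f_decr : forall r s, 0 < r -> r < s -> f s < f r)
  (g_gt0 : forall r, 0 <= r -> 0 < g r)
  (g_incr : forall r s, 0 <= r -> r < s -> g r < g s)
  (g_cvgy : g r @[r --> +oo] --> +oo)
  (g_div_lnf_cvg0 : g r / `|ln (f r)| @[r --> +oo] --> 0)
  (Ktt_gt0 : 0 < Kt * t)
  (eta_gt0 : forall r, 0 <= r -> 0 < eta r)
  (eta_incr : forall r s, 0 <= r -> r <= s -> eta r <= eta s).

Lemma f_cvgy0 : f r @[r --> +oo] --> 0.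
Proof.
apply/cvgr0Pnorm_lt => e e0; have [finv0 ffinv] := f_finv e0.
near=> r; have r_gt : finv e < r by near: r; exact: (nbhs_pinfty_gt (num_real _)).
by rewrite gtr0_norm ?f_gt0 ?(lt_trans finv0) // -[X in _ < X]ffinv f_decr.
Unshelve. all: end_near.
Qed.

Lemma le_finv x y : 0 < x -> 0 < y -> y <= f x -> x <= finv y.
Proof.
move=> x0 y0 yfx; have [fy0 ffy] := f_finv y0.
by rewrite leNgt; apply/negP => /(f_decr fy0); rewrite ffy ltNge yfx.
Qed.

Lemma finvK x : 0 < x -> finv (f x) = x.
Proof.
move=> x0; have [fx0 ffx] := f_finv (f_gt0 x0).
apply/eqP; rewrite eq_le le_finv ?f_gt0 // andbT leNgt; apply/negP => /(f_decr x0).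
by rewrite ffx ltxx.
Qed.

Lemma g_le r s : 0 <= r -> r <= s -> g r <= g s.
Proof. by move=> r_ge0; rewrite le_eqVlt => /predU1P[-> //|/(g_incr r_ge0)/ltW]. Qed.

Lemma Ht_powR_near : \forall r \near +oo, H r = f r `^ theta r.
Proof.
near=> r; have r_gt0 : 0 < r by near: r; exact: nbhs_pinfty_gt.
apply: Ht_powR => //; last exact/eta_gt0/ltW.
rewrite f_gt0 //=.
by near: r; exact: cvgr_lt f_cvgy0 _ ltr01.
Unshelve. all: end_near.
Qed.

Lemma Ht_exponent_gt_near p : p < 2 - b -> \forall r \near +oo, p < theta r.
Proof. exact/cvgr_gt/Ht_exponent_cvg. Qed.

Lemma sqr_le_Ht_near : \forall r \near +oo, f r ^+ 2 <= H r.
Proof.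
near=> r; have r1 : 1 <= r by near: r; exact: nbhs_pinfty_ge.
have r_gt0 : 0 < r := lt_le_trans ltr01 r1.
have [fr0 er0] := (f_gt0 r_gt0, eta_gt0 (ltW r_gt0)).
rewrite -ler_ln ?posrE ?exprn_gt0 ?Ht_gt0 // ln_Ht // lnXn // mulr_natl.
have lnr : 0 <= (d.-1)%:R * ln r by rewrite mulr_ge0 ?ln_ge0.
have eta1r : ln (eta 1) <= ln (eta r) by rewrite ler_ln ?posrE ?eta_gt0 ?eta_incr.
have gr : - ln (eta 1) <= Kt * t * g r.
  by rewrite -ler_pdivrMl //; near: r; move/cvgryPge : g_cvgy; apply.
lra.
Unshelve. all: end_near.
Qed.

Lemma Ht_le_powR_near p : p < 2 - b -> \forall r \near +oo, H r <= f r `^ p.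
Proof.
move=> pb; near=> r.
have r_gt0 : 0 < r by near: r; exact: nbhs_pinfty_gt.
rewrite (near Ht_powR_near r) //; apply: ger_powR.
  by rewrite f_gt0 //=; apply: ltW; near: r; exact: cvgr_lt f_cvgy0 _ ltr01.
by apply: ltW; near: r; exact: Ht_exponent_gt_near.
Unshelve. all: end_near.
Qed.

Lemma Ht_two_sided_bound eps : 0 < eps -> eps < 2 - b ->
  exists reps, 0 < reps /\ forall r, reps < r ->
    f r ^+ 2 <= H r /\ H r <= f r `^ (2 - b - eps).
Proof.
move=> e0 eb; apply: near_pinfty_pos; near=> r; split; near: r.
  exact: sqr_le_Ht_near.
by apply: Ht_le_powR_near; rewrite ltrBlDr ltrDl.
Unshelve. all: end_near.
Qed.

Hypotheses (f_cont : {in `]0, +oo[, continuous f})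
  (g_cont : {within `[0, +oo[, continuous g})
  (eta_cont : {within `[0, +oo[, continuous eta})
  (g_div_lnf_decr : exists r0, forall r s, r0 <= r -> r <= s ->
     g s / `|ln (f s)| <= g r / `|ln (f r)|)
  (bratio_decr : exists r0, forall r s, r0 <= r -> r <= s ->
     bratio d f eta s <= bratio d f eta r)
  (b_lt2 : b < 2).

Lemma Ht_exponent_nondecr : exists r0, forall r s, r0 <= r -> r <= s -> theta r <= theta s.
Proof.
have [[r1 g_r1] [r2 b_r2]] := (g_div_lnf_decr, bratio_decr).
exists (Num.max r1 r2) => r s; rewrite ge_max => /andP[r1r r2r] rs.
rewrite /Ht_exponent !lerB // ?b_r2 // ler_pM2l //.
exact: g_r1.
Qed.

Lemma Ht_decr_halfline : exists r0, 0 < r0 /\ {in `[r0, +oo[, continuous H} /\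
  forall r s, r0 <= r -> r < s -> H s < H r.
Proof.
have [r1 theta_r1] := Ht_exponent_nondecr.
have [M [M0 HM]] : exists M, 0 < M /\ forall r, M < r ->
    [/\ 0 < r, f r < 1, 0 < theta r, H r = f r `^ theta r & r1 <= r].
  apply: near_pinfty_pos; near=> r; split.
  - by near: r; exact: nbhs_pinfty_gt.
  - by near: r; exact: cvgr_lt f_cvgy0 _ ltr01.
  - by near: r; apply: Ht_exponent_gt_near; rewrite subr_gt0.
  - by near: r; exact: Ht_powR_near.
  - by near: r; exact: (nbhs_pinfty_ge (num_real _)).
have HM1 r : M + 1 <= r -> [/\ 0 < r, f r < 1, 0 < theta r, H r = f r `^ theta r & r1 <= r].
  by move=> Mr; apply: HM; apply: lt_le_trans Mr; rewrite ltrDl.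
have M10 : 0 < M + 1 by rewrite addr_gt0.
exists (M + 1); split => //; split.
  move=> r; rewrite in_itv /= andbT => Mr; apply: Ht_continuous.
  - exact: f_cont.
  - by have [] := (continuous_within_itvcyP 0 g).1 g_cont.
  - by have [] := (continuous_within_itvcyP 0 eta).1 eta_cont.
  - by rewrite in_itv /= andbT (lt_le_trans M10).
move=> r s Mr rs; have Ms := le_trans Mr (ltW rs).
have [r_gt0 fr1 thr0 Hr r1r] := HM1 r Mr; have [s_gt0 fs1 ths0 Hs _] := HM1 s Ms.
rewrite Hr Hs; apply: le_lt_trans (ger_powR _ (theta_r1 r s r1r (ltW rs))) _.
  by rewrite f_gt0 // ltW.
by apply: gt0_ltr_powR; rewrite // ?nnegrE ?(ltW (f_gt0 _)) // f_decr.
Unshelve. all: end_near.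
Qed.

Hypotheses (b_ge0 : 0 <= b) (omega_ge0 : 0 <= omega)
  (kappa_gt0 : 0 < kappa) (kappat_gt0 : 0 < kappat).

Lemma gamma_cvgy : gamma u @[u --> +oo] --> +oo.
Proof.
apply: (decr_cvg0_cvgy Ht_decr).
- near=> r; have r_gt0 : 0 < r by near: r; exact: nbhs_pinfty_gt.
  by rewrite Ht_gt0 ?f_gt0 // eta_gt0 // ltW.
- by apply: filterS gamma_spec => u [].
apply: cvg_trans (_ : kappat / u @[u --> +oo] --> 0).
  by apply: near_eq_cvg; apply: filterS gamma_spec => u [_ ->].
rewrite -(mulr0 kappat); apply: cvgMl_tmp; apply/gtr0_cvgV0; last exact: cvg_id.
exact: nbhs_pinfty_gt.
Unshelve. all: end_near.
Qed.

Lemma near_gamma (P : R -> Prop) :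
  (\forall r \near +oo, P r) -> \forall u \near +oo, P (gamma u).
Proof. exact: gamma_cvgy. Qed.

Lemma gamma_gt0_near : \forall u \near +oo, 0 < gamma u.
Proof. by apply: (near_gamma (P := fun r => 0 < r)); exact: nbhs_pinfty_gt. Qed.

Lemma alpha_gt0_near : \forall u \near +oo, 0 < alpha u.
Proof. by apply: filterS alpha_spec => u []. Qed.

Lemma f_gamma_cvg0r : f (gamma u) @[u --> +oo] --> 0^'+.
Proof.
apply: cvg_at_right0; first exact: (cvg_comp _ _ gamma_cvgy f_cvgy0).
by apply: filterS gamma_gt0_near => u /f_gt0.
Qed.

Lemma f_alpha_cvg0r : f (alpha u) @[u --> +oo] --> 0^'+.
Proof.
apply: (sqr_le_div_cvg0r (c := kappa)); apply: filterS alpha_spec => u [a0 ->].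
by split; [exact: f_gt0 | exact: lexx].
Qed.

Lemma g_ratio_bound_near (T : Type) (F : set_system T) (FF : Filter F) (x y : T -> R)
    c lam delta : 0 < c -> 1 <= lam -> 0 < delta -> f (y u) @[u --> F] --> 0^'+ ->
  (\forall u \near F, [/\ 0 < x u, 0 < y u & c * f (y u) `^ lam <= f (x u)]) ->
  \forall u \near F, g (x u) <= (lam `^ omega + delta) * g (y u).
Proof.
move=> c0 lam1 d0 fy0 xy.
have ratio : \forall s \near 0^'+,
    ((g (finv (c * s `^ lam)) / g (finv s))%:E < (lam `^ omega + delta)%:E)%E.
  by apply: limf_esup_lt_near; apply: le_lt_trans (profile c0 lam1) _; rewrite lte_fin ltrDl.
apply: filterS2 xy (fy0 _ ratio) => u [x0 y0 cfy] /=; rewrite lte_fin finvK //.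
have cs0 : 0 < c * f (y u) `^ lam by rewrite mulr_gt0 ?powR_gt0 ?f_gt0.
rewrite ltr_pdivrMr ?(g_gt0 (ltW y0)) // => /ltW; apply: le_trans.
exact: g_le (ltW x0) (le_finv x0 cs0 cfy).
Qed.

Lemma g_ratio_liminf_ge1 :
  (1%:E <= limf_einf (fun u => (g (gamma u) / g (alpha u))%:E) (+oo_R)%R)%E.
Proof.
apply/lee_subgt0Pr => delta d0; apply: limf_einf_ge_near.
set C := Num.sqrt (kappat / kappa).
have C0 : 0 < C by rewrite sqrtr_gt0 divr_gt0.
have ga : \forall u \near +oo, g (alpha u) <= (1 + delta) * g (gamma u).
  have := @g_ratio_bound_near _ _ _ alpha gamma C^-1 1 delta.
  rewrite powR1; apply; rewrite ?invr_gt0 //; first exact: f_gamma_cvg0r.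
  near=> u.
  have [a0 fa] : 0 < alpha u /\ f (alpha u) ^+ 2 = kappa / u by near: u.
  have [_ Hg] : r0 <= gamma u /\ H (gamma u) = kappat / u by near: u.
  have g0 : 0 < gamma u by near: u; exact: gamma_gt0_near.
  have fH : f (gamma u) ^+ 2 <= H (gamma u).
    by near: u; apply: (near_gamma (P := fun r => f r ^+ 2 <= H r)); exact: sqr_le_Ht_near.
  have u0 : 0 < u by near: u; exact: nbhs_pinfty_gt.
  split => //; rewrite powRr1 ?(ltW (f_gt0 g0)) // ler_pdivrMl //.
  rewrite -(ler_pXn2r (_ : (0 < 2)%N)) ?nnegrE ?mulr_ge0 ?(ltW (f_gt0 _)) ?(ltW C0) //.
  rewrite exprMn sqr_sqrtr ?divr_ge0 ?(ltW kappa_gt0) ?(ltW kappat_gt0) // fa.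
  have -> : kappat / kappa * (kappa / u) = H (gamma u) by rewrite Hg; field; rewrite !gt_eqF.
  exact: fH.
near=> u.
have gu : g (alpha u) <= (1 + delta) * g (gamma u) by near: u.
have a0 : 0 < alpha u by near: u; exact: alpha_gt0_near.
have g0 : 0 < gamma u by near: u; exact: gamma_gt0_near.
have [gg0 ga0] := (g_gt0 (ltW g0), g_gt0 (ltW a0)).
rewrite -EFinB lee_fin ler_pdivlMr //.
have [d1|d1] := leP delta 1; nra.
Unshelve. all: end_near.
Qed.

Lemma g_ratio_limsup_near p delta : 0 < p -> p <= 2 -> p < 2 - b -> 0 < delta ->
  \forall u \near +oo, g (gamma u) <= ((2 / p) `^ omega + delta) * g (alpha u).
Proof.
move=> p0 p2 pb d0; set c := (kappat / kappa) `^ p^-1.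
have kk0 : 0 <= kappat / kappa by rewrite divr_ge0 // ltW.
apply: (@g_ratio_bound_near _ _ _ gamma alpha c) => //.
- by rewrite powR_gt0 // divr_gt0.
- by rewrite ler_pdivlMr // mul1r.
- exact: f_alpha_cvg0r.
near=> u.
have [a0 fa] : 0 < alpha u /\ f (alpha u) ^+ 2 = kappa / u by near: u.
have [_ Hg] : r0 <= gamma u /\ H (gamma u) = kappat / u by near: u.
have g0 : 0 < gamma u by near: u; exact: gamma_gt0_near.
have Hf : H (gamma u) <= f (gamma u) `^ p.
  by near: u; apply: (near_gamma (P := fun r => H r <= f r `^ p)); exact: Ht_le_powR_near.
have u0 : 0 < u by near: u; exact: nbhs_pinfty_gt.
have [fa0 fg0] := (f_gt0 a0, f_gt0 g0).
split => //.
have -> : c * f (alpha u) `^ (2 / p) = (kappat / u) `^ p^-1.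
  rewrite -[kappat / u](_ : kappat / kappa * f (alpha u) ^+ 2 = _); last first.
    by rewrite fa; field; rewrite !gt_eqF.
  by rewrite powRM // ?sqr_ge0 // -(powR_mulrn 2 (ltW fa0)) -powRrM.
have H0 : 0 <= H (gamma u) by rewrite ltW // Ht_gt0 // eta_gt0 // ltW.
rewrite -Hg; apply: le_trans (ge0_ler_powR _ _ _ Hf) _.
- by rewrite invr_ge0 ltW.
- by rewrite nnegrE.
- by rewrite nnegrE powR_ge0.
by rewrite -powRrM mulfV ?gt_eqF // powRr1 // ltW.
Unshelve. all: end_near.
Qed.

Lemma g_ratio_limsup_le :
  (limf_esup (fun u => (g (gamma u) / g (alpha u))%:E) (+oo_R)%R
     <= ((2 / (2 - b)) `^ omega)%:E)%E.
Proof.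
apply/lee_addgt0Pr => delta d0.
have [p [p0 pb pT]] : exists p, [/\ 0 < p, p < 2 - b &
    (2 / p) `^ omega <= (2 / (2 - b)) `^ omega + delta / 2].
  by apply: powR_div_approx_left; rewrite ?divr_gt0 ?subr_gt0.
have p2 : p <= 2 by rewrite ltW // (lt_le_trans pb) // gerBl.
apply: limf_esup_le_near; near=> u.
have gu : g (gamma u) <= ((2 / p) `^ omega + delta / 2) * g (alpha u).
  by near: u; apply: g_ratio_limsup_near; rewrite ?divr_gt0.
have a0 : 0 < alpha u by near: u; exact: alpha_gt0_near.
have ga0 := g_gt0 (ltW a0).
rewrite lee_fin ler_pdivrMr //; apply: le_trans gu _.
by rewrite ler_wpM2r ?(ltW ga0) //; lra.
Unshelve. all: end_near.
Qed.

Lemma g_gamma_le_ln e : 0 < e -> \forall u \near +oo, g (gamma u) <= e * ln u.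
Proof.
move=> e0; have [p [p0 pb]] : exists p, 0 < p /\ p < 2 - b.
  by exists ((2 - b) / 2); move: b_lt2; split; lra.
near=> u.
have u0 : 0 < u by near: u; exact: nbhs_pinfty_gt.
have lnu : - ln kappat <= ln u by near: u; move/cvgryPge: (@ln_cvgy R); apply.
have [_ Hg] : r0 <= gamma u /\ H (gamma u) = kappat / u by near: u.
have [g0 fg1 thg Gg Hpow] : [/\ 0 < gamma u, f (gamma u) < 1, p < theta (gamma u),
    g (gamma u) / `|ln (f (gamma u))| < e * p / 2 &
    H (gamma u) = f (gamma u) `^ theta (gamma u)].
  near: u; apply: (near_gamma (P := fun r => [/\ 0 < r, f r < 1, p < theta r,
    g r / `|ln (f r)| < e * p / 2 & H r = f r `^ theta r])).
  near=> r; split; near: r.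
  - exact: nbhs_pinfty_gt.
  - exact: cvgr_lt f_cvgy0 _ ltr01.
  - exact: Ht_exponent_gt_near.
  - by apply: cvgr_lt g_div_lnf_cvg0 _ _; rewrite !mulr_gt0.
  - exact: Ht_powR_near.
have fg0 := f_gt0 g0; set L := - ln (f (gamma u)).
have L0 : 0 < L by rewrite oppr_gt0 ln_lt0 // fg0.
have pL : p * L <= ln u - ln kappat.
  have : ln (H (gamma u)) = ln (kappat / u) by rewrite Hg.
  rewrite Hpow ln_powR lnM ?posrE ?invr_gt0 // lnV ?posrE // => thL.
  by apply: le_trans (_ : theta (gamma u) * L <= _); rewrite ?ler_pM2r ?(ltW thg) // /L; lra.
rewrite ltr0_norm ?ln_lt0 ?fg0 // -/L ltr_pdivrMr // in Gg.
nra.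
Unshelve. all: end_near.
Qed.

Lemma wt_gamma_cvg0 delta : 0 < delta ->
  wt Kt t g (gamma u) / u `^ delta @[u --> +oo] --> 0.
Proof.
move=> d0; apply: (@sublog_expR_div_powR_cvg0 _ _ (fun u => g (gamma u)) 4 (Kt * t + 1)).
- by rewrite addr_gt0.
- exact: d0.
- exact: g_gamma_le_ln.
apply: (near_gamma (P := fun r => 0 <= wt Kt t g r <= 4 * expR ((Kt * t + 1) * g r))).
near=> r; have gr0 : 0 <= g r by rewrite ltW // g_gt0.
by rewrite wt_le_expR // andbT /wt mulr_ge0 ?expR_ge0 ?sqr_ge0.
Unshelve. all: end_near.
Qed.

Hypotheses (sigma_lt : forall r, 1 <= r -> sigma r < r)
  (log_ratio_cvg0 : (ln (eta r) - ln (r - sigma r)) / g r @[r --> +oo] --> 0).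

Lemma log_ratio_gamma_alpha_cvg0 :
  (ln (eta (gamma u)) - ln (gamma u - sigma (gamma u))) / g (alpha u) @[u --> +oo] --> 0.
Proof.
set N := fun r => ln (eta r) - ln (r - sigma r).
have [p [p0 p2 pb]] : exists p, [/\ 0 < p, p <= 2 & p < 2 - b].
  by exists ((2 - b) / 2); move: b_lt2 b_ge0; split; lra.
apply: (@cvg_trans _ (N (gamma u) / g (gamma u) * (g (gamma u) / g (alpha u)) @[u --> +oo])).
  apply: near_eq_cvg; near=> u.
  have a0 : 0 < alpha u by near: u; exact: alpha_gt0_near.
  have g0 : 0 < gamma u by near: u; exact: gamma_gt0_near.
  by rewrite mulrA divfK // gt_eqF // g_gt0 // ltW.
apply: (@cvg0_mul_bounded _ _ _ _ _ _ ((2 / p) `^ omega + 1)).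
  exact: (cvg_comp _ _ gamma_cvgy log_ratio_cvg0).
near=> u.
have gu : g (gamma u) <= ((2 / p) `^ omega + 1) * g (alpha u).
  by near: u; exact: g_ratio_limsup_near.
have a0 : 0 < alpha u by near: u; exact: alpha_gt0_near.
have g0 : 0 < gamma u by near: u; exact: gamma_gt0_near.
have [gg0 ga0] := (g_gt0 (ltW g0), g_gt0 (ltW a0)).
by rewrite ger0_norm ?divr_ge0 ?(ltW gg0) ?(ltW ga0) // ler_pdivrMr.
Unshelve. all: end_near.
Qed.

Lemma vt_gamma_cvg0 delta : 0 < delta ->
  vt Kt t g eta sigma (gamma u) / u `^ delta @[u --> +oo] --> 0.
Proof.
move=> d0; apply: (@sublog_expR_div_powR_cvg0 _ _ (fun u => g (gamma u)) 4 (Kt * t + 2)).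
- by rewrite addr_gt0.
- exact: d0.
- exact: g_gamma_le_ln.
apply: (near_gamma
  (P := fun r => 0 <= vt Kt t g eta sigma r <= 4 * expR ((Kt * t + 2) * g r))).
near=> r; have r1 : 1 <= r by near: r; exact: nbhs_pinfty_ge.
have r_ge0 : 0 <= r := le_trans ler01 r1.
have [gr0 er0] := (g_gt0 r_ge0, eta_gt0 r_ge0); have sr := sigma_lt r1.
have Ng : ln (eta r) - ln (r - sigma r) <= g r.
  have : `|(ln (eta r) - ln (r - sigma r)) / g r| < 1.
    by near: r; exact: (cvgr0Pnorm_lt _).1 log_ratio_cvg0 _ ltr01.
  by move/ltr_normlW; rewrite ltr_pdivrMr // mul1r => /ltW.
rewrite vt_le_expR ?(ltW gr0) // andbT.
have rs0 : 0 < r - sigma r by rewrite subr_gt0.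
exact: divr_ge0 (mulr_ge0 (mulr_ge0 (sqr_ge0 _) (expR_ge0 _)) (ltW er0)) (ltW rs0).
Unshelve. all: end_near.
Qed.

End Ht_asymptotics.

Theorem lemma5p1 (R : realType) (d : nat) (f g finv eta sigma : R -> R)
  (C6 R0 omega Kt t kappa kappat b : R) :
  (1 <= d)%N ->
  (* standing properties of f and g coming from (A) *)
  (forall r, 0 < r -> 0 < f r) ->
  {in `]0, +oo[, continuous f} ->
  (forall r s, 0 < r -> r < s -> f s < f r) ->
  (forall y, 0 < y -> 0 < finv y /\ f (finv y) = y) ->
  (forall r, 0 <= r -> 0 < g r) ->
  {within `[0, +oo[, continuous g} ->
  (forall r s, 0 <= r -> r < s -> g r < g s) ->
  g r @[r --> +oo] --> +oo ->
  (* (A3) *)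
  1 <= C6 -> 0 < R0 -> (forall r, R0 <= r -> g (r + 1) <= C6 * g r) ->
  (* (D) *)
  (exists r0, forall r s, r0 <= r -> r <= s ->
       g s / `|ln (f s)| <= g r / `|ln (f r)|) ->
  g r / `|ln (f r)| @[r --> +oo] --> 0 ->
  (* the profile condition with exponent omega *)
  0 <= omega ->
  (forall c lam, 0 < c -> 1 <= lam ->
     (limf_esup (fun s => (g (finv (c * s `^ lam)) / g (finv s))%:E) (0^'+)
       <= (lam `^ omega)%:E)%E) ->
  (* constants *)
  0 < Kt -> 0 < t -> 0 < kappa -> 0 < kappat ->
  (* eta and sigma *)
  (forall r, 0 <= r -> 0 < eta r) ->
  {within `[0, +oo[, continuous eta} ->
  (forall r s, 0 <= r -> r <= s -> eta r <= eta s) ->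
  (forall r, 0 <= r -> 0 < sigma r) ->
  {within `[0, +oo[, continuous sigma} ->
  (forall r s, 0 <= r -> r <= s -> sigma r <= sigma s) ->
  (@lebesgue_measure R).-integrable `]1, +oo[ (fun x => ((eta x)^-1)%:E) ->
  (forall r, 1 <= r -> sigma r < r) ->
  (exists M, forall r, 1 <= r -> f (sigma r) / f r <= M) ->
  (exists r0, forall r s, r0 <= r -> r <= s ->
       bratio d f eta s <= bratio d f eta r) ->
  bratio d f eta r @[r --> +oo] --> b ->
  0 <= b -> b < 2 ->
  (* conclusions *)
  ((* (a): two-sided bound on H_t *)
   (forall eps, 0 < eps -> eps < 2 - b ->
     exists reps, 0 < reps /\ forall r, reps < r ->
       f r ^+ 2 <= Ht d Kt t f g eta r /\
       Ht d Kt t f g eta r <= f r `^ (2 - b - eps))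
   (* existence of a half-line where H_t is continuous and strictly decreasing *)
   /\ (exists r0, 0 < r0 /\ {in `[r0, +oo[, continuous (Ht d Kt t f g eta)} /\
         forall r s, r0 <= r -> r < s ->
           Ht d Kt t f g eta s < Ht d Kt t f g eta r)
   /\
   (* for any such half-line, gamma_t = H_t^{-1}(kappat / .) there, and
      alpha_t = (f^2)^{-1}(kappa / .) *)
   forall (r0 : R) (gamma alpha : R -> R),
     {in `[r0, +oo[, continuous (Ht d Kt t f g eta)} ->
     (forall r s, r0 <= r -> r < s ->
        Ht d Kt t f g eta s < Ht d Kt t f g eta r) ->
     (\forall u \near +oo, r0 <= gamma u /\ Ht d Kt t f g eta (gamma u) = kappat / u) ->
     (\forall u \near +oo, 0 < alpha u /\ f (alpha u) ^+ 2 = kappa / u) ->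
     ((1%:E <= limf_einf (fun u => (g (gamma u) / g (alpha u))%:E) (+oo_R)%R)%E /\
      (limf_einf (fun u => (g (gamma u) / g (alpha u))%:E) (+oo_R)%R
         <= limf_esup (fun u => (g (gamma u) / g (alpha u))%:E) (+oo_R)%R)%E /\
      (limf_esup (fun u => (g (gamma u) / g (alpha u))%:E) (+oo_R)%R
         <= ((2 / (2 - b)) `^ omega)%:E)%E /\
      (forall delta, 0 < delta ->
         wt Kt t g (gamma u) / u `^ delta @[u --> +oo] --> 0)) /\
     (* (b) *)
     ((ln (eta r) - ln (r - sigma r)) / g r @[r --> +oo] --> 0 ->
      ((ln (eta (gamma u)) - ln (gamma u - sigma (gamma u))) / g (alpha u)
         @[u --> +oo] --> 0) /\
      (forall delta, 0 < delta ->
         vt Kt t g eta sigma (gamma u) / u `^ delta @[u --> +oo] --> 0))).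
Proof.
move=> _ f_gt0 f_cont f_decr f_finv g_gt0 g_cont g_incr g_cvgy _ _ _
  g_div_lnf_decr g_div_lnf_cvg0 omega_ge0 profile Kt_gt0 t_gt0 kappa_gt0 kappat_gt0
  eta_gt0 eta_cont eta_incr _ _ _ _ sigma_lt _ bratio_decr bratio_cvg b_ge0 b_lt2.
have Ktt_gt0 : 0 < Kt * t by rewrite mulr_gt0.
split; first exact: (Ht_two_sided_bound f_finv).
split; first exact: (Ht_decr_halfline f_finv bratio_cvg).
move=> r0 gamma alpha _ Ht_decr gamma_spec alpha_spec.
split.
  split; first exact: (g_ratio_liminf_ge1 f_finv Ht_decr gamma_spec alpha_spec profile).
  split; first exact: limf_einf_le_esup.
  split; first exact: (g_ratio_limsup_le f_finv bratio_cvg Ht_decr gamma_spec alpha_spec profile).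
  exact: (wt_gamma_cvg0 f_finv bratio_cvg Ht_decr gamma_spec).
move=> log_ratio_cvg0.
split.
  exact: (log_ratio_gamma_alpha_cvg0 f_finv bratio_cvg Ht_decr gamma_spec alpha_spec profile).
exact: (vt_gamma_cvg0 f_finv bratio_cvg Ht_decr gamma_spec).
Qed.
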